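(* Let $\mathbb{H}$ be the real quaternions, $\sigma=\mathrm{Id}$, $\delta=0$. A vector $(a_1,\dots,a_r)\in\mathbb{H}^r$ is a $(\sigma,\delta)$-multiplicity sequence if and only if either $a_1=a_2=\dots=a_r\in\mathbb{R}$, or $a_1,\dots,a_r\in\mathbb{H}\setminus\mathbb{R}$ and for $i=1,\dots,r-1$: $$\mathrm{Re}(a_{i+1})=\mathrm{Re}(a_i),\quad |a_{i+1}|=|a_i|,\quad \overline{a_{i+1}}\ne a_i.$$ In particular $(a,\dots,a)\in\mathbb{H}^r$ is a $(\sigma,\delta)$-multiplicity sequence for every $a\in\mathbb{H}$ and $r\in\mathbb{Z}_+$.
   Context: $\mathbb{H}[x]=\mathbb{H}[x;\mathrm{Id},0]$ is the polynomial ring over the quaternions with $x$ commuting with coefficients. For $q=a+b\mathbf i+c\mathbf j+d\mathbf k$, $\mathrm{Re}(q)=a$, $\overline q=a-b\mathbf i-c\mathbf j-d\mathbf k$, $|q|=\sqrt{q\overline q}$. For $\mathbf a=(a_1,\dots,a_r)$, $P_{\mathbf a}=(x-a_r)\cdots(x-a_1)$; $\mathbf a$ is a $(\sigma,\delta)$-multiplicity sequence if $a_1$ is the only $b\in\mathbb{H}$ such that $x-b$ divides $P_{\mathbf a}$ on the right. *)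

From HB Require Import structures.
From mathcomp Require Import all_boot all_order all_algebra.
From mathcomp Require Import ring.
From mathcomp Require Import reals.
Set Implicit Arguments. Unset Strict Implicit. Unset Printing Implicit Defensive.
Import Order.TTheory GRing.Theory Num.Theory.
Local Open Scope ring_scope.

Section Quaternions.
Variable R : realType.

(* q = Quat a b c d  stands for  a + b i + c j + d k *)
Record quat := Quat { qre : R; qi : R; qj : R; qk : R }.

Definition quat2tuple (q : quat) := (qre q, qi q, qj q, qk q).
Definition tuple2quat (t : R * R * R * R) :=
  let: (a, b, c, d) := t in Quat a b c d.
Lemma quat2tupleK : cancel quat2tuple tuple2quat. Proof. by case. Qed.

HB.instance Definition _ := Equality.copy quat (can_type quat2tupleK).
HB.instance Definition _ := Choice.copy quat (can_type quat2tupleK).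

Definition qzero := Quat 0 0 0 0.
Definition qone := Quat 1 0 0 0.
Definition qadd (p q : quat) :=
  Quat (qre p + qre q) (qi p + qi q) (qj p + qj q) (qk p + qk q).
Definition qopp (p : quat) := Quat (- qre p) (- qi p) (- qj p) (- qk p).
(* Hamilton product, i^2 = j^2 = k^2 = ijk = -1 *)
Definition qmul (p q : quat) :=
  let: Quat a1 b1 c1 d1 := p in let: Quat a2 b2 c2 d2 := q in
  Quat (a1 * a2 - b1 * b2 - c1 * c2 - d1 * d2)
       (a1 * b2 + b1 * a2 + c1 * d2 - d1 * c2)
       (a1 * c2 - b1 * d2 + c1 * a2 + d1 * b2)
       (a1 * d2 + b1 * c2 - c1 * b2 + d1 * a2).

Lemma qaddA : associative qadd.
Proof. by case=> ? ? ? ?; case=> ? ? ? ?; case=> ? ? ? ?; rewrite /qadd /= !addrA. Qed.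
Lemma qaddC : commutative qadd.
Proof. by case=> ? ? ? ?; case=> ? ? ? ?; rewrite /qadd /= [X in Quat X _ _ _]addrC
  [X in Quat _ X _ _]addrC [X in Quat _ _ X _]addrC [X in Quat _ _ _ X]addrC. Qed.
Lemma qadd0 : left_id qzero qadd.
Proof. by case=> ? ? ? ?; rewrite /qadd /= !add0r. Qed.
Lemma qaddN : left_inverse qzero qopp qadd.
Proof. by case=> ? ? ? ?; rewrite /qadd /= !addNr. Qed.

HB.instance Definition _ := GRing.isZmodule.Build quat qaddA qaddC qadd0 qaddN.

Lemma qmulA : associative qmul.
Proof. case=> ? ? ? ?; case=> ? ? ? ?; case=> ? ? ? ?; rewrite /qmul /=; congr Quat; ring. Qed.
Lemma qmul1 : left_id qone qmul.
Proof. case=> ? ? ? ?; rewrite /qmul /=; congr Quat; ring. Qed.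
Lemma qmulr1 : right_id qone qmul.
Proof. case=> ? ? ? ?; rewrite /qmul /=; congr Quat; ring. Qed.
Lemma qmulDl : left_distributive qmul +%R.
Proof. case=> ? ? ? ?; case=> ? ? ? ?; case=> ? ? ? ?;
  rewrite /GRing.add /= /qadd /qmul /=; congr Quat; ring. Qed.
Lemma qmulDr : right_distributive qmul +%R.
Proof. case=> ? ? ? ?; case=> ? ? ? ?; case=> ? ? ? ?;
  rewrite /GRing.add /= /qadd /qmul /=; congr Quat; ring. Qed.
Lemma qone_neq0 : qone != 0.
Proof. apply/negP=> /eqP [] /eqP; by rewrite oner_eq0. Qed.

HB.instance Definition _ :=
  GRing.Zmodule_isNzRing.Build quat qmulA qmul1 qmulr1 qmulDl qmulDr qone_neq0.

Definition qreal (a : R) := Quat a 0 0 0.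
Definition Req (q : quat) := qre q.
Definition qconj (q : quat) := Quat (qre q) (- qi q) (- qj q) (- qk q).
Definition qnorm (q : quat) := Num.sqrt (qre (q * qconj q)).
Definition is_real_quat (q : quat) := exists a : R, q = qreal a.

(* H[x] = H[x; Id, 0] : {poly quat}, with 'X central.
   P_a = (x - a_r) ... (x - a_1)  for a = [:: a_1; ...; a_r] *)
Definition Pseq (a : seq quat) : {poly quat} :=
  \prod_(c <- rev a) ('X - c%:P).

Definition rdivides_lin (b : quat) (P : {poly quat}) :=
  exists Q : {poly quat}, P = Q * ('X - b%:P).

Definition mult_seq (a : seq quat) :=
  match a with
  | [::] => False
  | a1 :: _ => rdivides_lin a1 (Pseq a) /\
               forall b, rdivides_lin b (Pseq a) -> b = a1
  end.

End Quaternions.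

From HB Require Import structures.
From mathcomp Require Import all_boot all_order all_algebra reals.
From mathcomp Require Import ring lra.
Set Implicit Arguments. Unset Strict Implicit. Unset Printing Implicit Defensive.
Import Order.TTheory GRing.Theory Num.Theory.
Local Open Scope ring_scope.

(* Write H for the quaternions over a real field and P_a = (x - a_r)...(x - a_1).
   The key observation is the twisted evaluation rule
     (Q (x - a))(b) = Q(b') (b - a),   where  b' = (b - a) b (b - a)^-1,
   valid in any ring (TwistedEvaluation).  Since H has no zero divisors, the
   right roots of Q (x - a) are a and the b whose twist b' is a root of Q.

   Call (a, c) an admissible pair when either c = a is real, or a and c are
   non-real, lie on the same 2-sphere {Re = const, |.| = const} and conj c <> a.
   Using that every quaternion satisfies q^2 = 2 Re(q) q - |q|^2, we show that
   (a, c) is admissible iff a is the only b with c (b - a) = (b - a) b, i.e. the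
   only right root of (x - c)(x - a) (AdmissiblePairs).  A polynomial acts
   affinely on each 2-sphere, so two distinct right roots on a sphere make the
   whole sphere consist of roots (Spheres).  Induction on the sequence then shows
   that a_1 is the only right root of P_a iff every consecutive pair is
   admissible, and unfolding the chain condition gives the theorem. *)

Section TwistedEvaluation.
Variable A : nzRingType.

(* In a noncommutative ring evaluation is not multiplicative; multiplying by a
   linear factor on the right conjugates the evaluation point instead. *)
Lemma horner_mulXsubC (Q : {poly A}) (a b b' : A) :
  b' * (b - a) = (b - a) * b -> (Q * ('X - a%:P)).[b] = Q.[b'] * (b - a).
Proof.
move=> twist; elim/poly_ind: Q => [|Q c IH]; first by rewrite mul0r !horner0 mul0r.
rewrite mulrDl -mulrA -(commr_polyX ('X - a%:P)) mulrA hornerD hornerMX hornerCM.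
by rewrite hornerXsubC IH hornerMXaddC mulrDl -mulrA -twist mulrA.
Qed.

End TwistedEvaluation.

Section QuaternionAlgebra.
Variable R : realType.
Local Notation H := (quat R).
Implicit Types (a p q d : H) (r : R).

Lemma quat_eqE (a b c d a' b' c' d' : R) :
  Quat a b c d = Quat a' b' c' d' <-> [/\ a = a', b = b', c = c' & d = d'].
Proof. by split=> [[-> -> -> ->]|[-> -> -> ->]]. Qed.

Lemma qaddE p q : p + q = qadd p q. Proof. by []. Qed.
Lemma qmulE p q : p * q = qmul p q. Proof. by []. Qed.
Lemma qoppE p : - p = qopp p. Proof. by []. Qed.
Lemma q0E : 0 = qzero R :> H. Proof. by []. Qed.

Ltac quat_unfold := rewrite ?qaddE ?qmulE ?qoppE ?q0E
  /qadd /qmul /qopp /qzero /qconj /qreal /Req /=.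
Ltac quat_ring := quat_unfold; apply/quat_eqE; split; ring.

Definition qnorm2 q := qre (q * qconj q).

Lemma qnorm2E (a b c d : R) : qnorm2 (Quat a b c d) = a^+2 + b^+2 + c^+2 + d^+2.
Proof. by rewrite /qnorm2; quat_unfold; ring. Qed.

Lemma qnorm2_ge0 q : 0 <= qnorm2 q.
Proof. by case: q => a b c d; rewrite qnorm2E; nra. Qed.

Lemma qnorm2_eq0 q : (qnorm2 q == 0) = (q == 0).
Proof.
apply/eqP/eqP => [|->]; last by rewrite /qnorm2; quat_unfold; ring.
case: q => a b c d; rewrite qnorm2E q0E /qzero => n0.
by apply/quat_eqE; split; nra.
Qed.

Lemma qnorm2M p q : qnorm2 (p * q) = qnorm2 p * qnorm2 q.
Proof. by case: p => ????; case: q => ????; rewrite /qnorm2; quat_unfold; ring. Qed.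

Lemma qnorm_eq p q : qnorm p = qnorm q <-> qnorm2 p = qnorm2 q.
Proof.
rewrite /qnorm -/(qnorm2 p) -/(qnorm2 q); split=> [|->] //.
by move/eqP; rewrite eqr_sqrt ?qnorm2_ge0 // => /eqP.
Qed.

Lemma qmul_eq0 p q : (p * q == 0) = (p == 0) || (q == 0).
Proof. by rewrite -!qnorm2_eq0 qnorm2M mulf_eq0. Qed.

Lemma qmul_lreg d : d != 0 -> GRing.lreg d.
Proof.
move=> dn; apply: mulrI0_lreg => x /eqP; rewrite qmul_eq0 (negPf dn).
by move/eqP.
Qed.

Lemma qrealC r q : qreal r * q = q * qreal r.
Proof. by case: q => ????; quat_ring. Qed.

Lemma qrealM r r' : qreal r * qreal r' = qreal (r * r') :> H.
Proof. by quat_ring. Qed.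

Lemma qmul_conj q : q * qconj q = qreal (qnorm2 q).
Proof. by case: q => ????; rewrite /qnorm2; quat_ring. Qed.

Lemma qconj_mul q : qconj q * q = qreal (qnorm2 q).
Proof. by case: q => ????; rewrite /qnorm2; quat_ring. Qed.

Lemma qadd_conj q : q + qconj q = qreal (Req q + Req q).
Proof. by case: q => ????; quat_ring. Qed.

Lemma qconjK q : qconj (qconj q) = q.
Proof. by case: q => ????; quat_ring. Qed.

Lemma qconj_Re q : Req (qconj q) = Req q. Proof. by case: q. Qed.

Lemma qconj_norm2 q : qnorm2 (qconj q) = qnorm2 q.
Proof. by case: q => ????; rewrite !qnorm2E /=; ring. Qed.

Lemma Req_mulC p q : Req (p * q) = Req (q * p).
Proof. by case: p => ????; case: q => ????; quat_unfold; ring. Qed.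

Lemma Req_mul_real p r : Req (p * qreal r) = Req p * r.
Proof. by case: p => ????; quat_unfold; ring. Qed.

Lemma quat_quadratic q : q * q = qreal (Req q + Req q) * q - qreal (qnorm2 q).
Proof. by case: q => ????; rewrite /qnorm2; quat_ring. Qed.

Definition qinv d := qreal (qnorm2 d)^-1 * qconj d.

Lemma qmulV d : d != 0 -> d * qinv d = 1.
Proof.
rewrite -qnorm2_eq0 => n0.
by rewrite /qinv mulrA -qrealC -mulrA qmul_conj qrealM mulVf.
Qed.

Lemma qmulVl d : d != 0 -> qinv d * d = 1.
Proof.
by rewrite -qnorm2_eq0 => n0; rewrite /qinv -mulrA qconj_mul qrealM mulVf.
Qed.

Lemma conjugate_invariants d x y :
  d != 0 -> x * d = d * y -> Req x = Req y /\ qnorm2 x = qnorm2 y.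
Proof.
rewrite -qnorm2_eq0 => n0 xdy; split.
  have : x * qreal (qnorm2 d) = d * (y * qconj d) by rewrite -qmul_conj !mulrA xdy.
  move/(congr1 (@Req R)); rewrite Req_mul_real Req_mulC -mulrA qconj_mul.
  by rewrite Req_mul_real => /(mulIf n0).
by have := congr1 qnorm2 xdy; rewrite !qnorm2M mulrC => /(mulfI n0).
Qed.

Lemma realP q : is_real_quat q <-> [/\ qi q = 0, qj q = 0 & qk q = 0].
Proof. by split=> [[a ->] //|]; case: q => a b c d /= [-> -> ->]; exists a. Qed.

Lemma real_quat_dec q : is_real_quat q \/ ~ is_real_quat q.
Proof.
have [/and3P[/eqP qi0 /eqP qj0 /eqP qk0]|nreal] :=
  boolP [&& qi q == 0, qj q == 0 & qk q == 0]; first by left; apply/realP.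
by right=> /realP[qi0 qj0 qk0]; rewrite qi0 qj0 qk0 !eqxx in nreal.
Qed.

Lemma real_quat_comm a q : is_real_quat a -> a * q = q * a.
Proof. by case=> r ->; apply: qrealC. Qed.

Lemma nonreal_conj q : ~ is_real_quat q -> qconj q <> q.
Proof.
case: q => a b c d nreal /quat_eqE[_ bE cE dE]; apply: nreal; apply/realP.
by move: bE cE dE => /= *; split; lra.
Qed.

End QuaternionAlgebra.

Section Spheres.
Variable R : realType.
Local Notation H := (quat R).
Implicit Types s : H.

Definition cosphere (p q : H) := Req p = Req q /\ qnorm2 p = qnorm2 q.

(* On the sphere {Re = t, |.|^2 = n} the relation s^2 = 2t s - n reduces every
   polynomial to an affine map s |-> A s + B. *)
Lemma horner_on_sphere (Q : {poly H}) (t n : R) :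
  exists A B : H, forall s, Req s = t -> qnorm2 s = n -> Q.[s] = A * s + B.
Proof.
elim/poly_ind: Q => [|Q c [A [B IH]]].
  by exists 0, 0 => s _ _; rewrite horner0 mul0r addr0.
exists (A * qreal (t + t) + B), (c - A * qreal n) => s st sn.
rewrite hornerMXaddC IH // mulrDl -mulrA (quat_quadratic s) st sn mulrBr !mulrA.
rewrite mulrDl [_ - _ + _]addrAC -!addrA; congr (_ + (_ + _)); exact: addrC.
Qed.

Lemma sphere_roots (Q : {poly H}) s1 s2 s :
  root Q s1 -> root Q s2 -> s1 != s2 -> cosphere s1 s -> cosphere s2 s -> root Q s.
Proof.
move=> /rootP r1 /rootP r2 s12 [Re1 N1] [Re2 N2].
have [A [B affine]] := horner_on_sphere Q (Req s) (qnorm2 s).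
move: r1 r2; rewrite !affine // => /eqP r1 /eqP r2.
rewrite addr_eq0 in r1; rewrite addr_eq0 in r2.
have : A * (s1 - s2) == 0 by rewrite mulrBr (eqP r1) (eqP r2) subrr.
rewrite qmul_eq0 subr_eq0 (negPf s12) orbF => /eqP A0.
by rewrite rootE affine // A0 mul0r add0r -oppr_eq0 -(eqP r1) A0 mul0r.
Qed.

End Spheres.

Section AdmissiblePairs.
Variable R : realType.
Local Notation H := (quat R).
Implicit Types a b c : H.

Definition admissible_pair a c :=
  (c = a /\ is_real_quat a) \/
  [/\ ~ is_real_quat a, ~ is_real_quat c, cosphere c a & qconj c <> a].

(* a is the only b twisted to c by b - a, i.e. by the twisted evaluation rule the
   only right root of (x - c)(x - a). *)
Definition rigid_pair a c := forall b, c * (b - a) = (b - a) * b -> b = a.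

(* For non-real a, c on one sphere, c (b - a) = (b - a) b forces
   (conj a - c)(b - a) = 0, and conj a - c <> 0. *)
Lemma admissible_rigid a c : admissible_pair a c -> rigid_pair a c.
Proof.
move=> adm b twist; have [//|ba] := eqVneq b a.
have dn : b - a != 0 by rewrite subr_eq0.
case: adm => [[ca areal]|[_ _ [Rca Nca] cja]].
  by move: twist; rewrite ca real_quat_comm // => /(qmul_lreg dn).
have [Rcb Ncb] := conjugate_invariants dn twist.
have en : qconj a - c != 0.
  by rewrite subr_eq0; apply/eqP=> e; apply: cja; rewrite -e qconjK.
have : (qconj a - c) * (b - a) == 0.
  rewrite mulrBl twist mulrBr !mulrBl (quat_quadratic b) -Rcb -Ncb Rca Nca.
  rewrite -qadd_conj -qconj_mul mulrDl [a * b + _]addrC.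
  by rewrite [qconj a * b + a * b - _]addrAC addrK subrr.
by rewrite qmul_eq0 (negPf en) (negPf dn).
Qed.

Lemma admissible_pair_refl a : admissible_pair a a.
Proof.
have [areal|anr] := real_quat_dec a; first by left.
by right; split=> //; exact: nonreal_conj.
Qed.

(* If (a, c) is not admissible we exhibit b <> a twisted to c: b = c when a and c
   commute, and otherwise b = e^-1 c e with e = conj c - a. *)
Lemma admissible_or_twist a c :
  admissible_pair a c \/ exists2 b, b != a & c * (b - a) = (b - a) * b.
Proof.
have [->|ca] := eqVneq c a; first by left; exact: admissible_pair_refl.
have [comm|ncomm] := eqVneq (a * c) (c * a).
  by right; exists c => //; rewrite mulrBr mulrBl comm.
have anr : ~ is_real_quat a by move=> /(real_quat_comm c) e; rewrite e eqxx in ncomm.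
have cnr : ~ is_real_quat c by move=> /(real_quat_comm a) e; rewrite e eqxx in ncomm.
have [/andP[/eqP Rca /eqP Nca]|nsph] :=
  boolP ((Req c == Req a) && (qnorm2 c == qnorm2 a)).
  left; right; split=> // cja.
  by move: ncomm; rewrite -cja qconj_mul qmul_conj eqxx.
right; set e := qconj c - a.
have en : e != 0.
  by rewrite subr_eq0; apply/eqP=> ca'; rewrite -ca' qconj_Re qconj_norm2 !eqxx in nsph.
pose b := qinv e * c * e.
have ceb : c * e = e * b by rewrite /b mulrA [e * (_ * c)]mulrA qmulV // mul1r.
have [Rcb Ncb] := conjugate_invariants en ceb.
exists b.
  by apply/eqP=> ba; rewrite Rcb Ncb ba !eqxx in nsph.
move: ceb; rewrite /e !mulrBr !mulrBl (quat_quadratic b) -Rcb -Ncb.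
rewrite -qadd_conj -qmul_conj mulrDl => ceb.
rewrite addrAC -[c * b + _ - a * b]addrA -ceb -addrA.
by rewrite [_ - c * a - _]addrAC subrr add0r.
Qed.

Lemma rigid_pairP a c : rigid_pair a c <-> admissible_pair a c.
Proof.
split=> [rigid|]; last exact: admissible_rigid.
by have [//|[b ba /rigid/eqP]] := admissible_or_twist a c; rewrite (negPf ba).
Qed.

End AdmissiblePairs.

Section MultiplicitySequences.
Variable R : realType.
Local Notation H := (quat R).
Implicit Types (a b c : H) (s : seq H) (Q : {poly H}).

Definition unique_root a Q := forall b, root Q b -> b = a.

Fixpoint admissible_chain a s : Prop :=
  if s is c :: s' then admissible_pair a c /\ admissible_chain c s' else True.

Lemma Pseq_cons a s : Pseq (a :: s) = Pseq s * ('X - a%:P).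
Proof. by rewrite /Pseq rev_cons big_rcons. Qed.

Lemma root_Pseq_head a s : root (Pseq (a :: s)) a.
Proof. by apply/factor_theorem; exists (Pseq s); rewrite Pseq_cons. Qed.

Lemma unique_root_admissible Q a c :
  unique_root a (Q * ('X - a%:P)) -> root Q c -> admissible_pair a c.
Proof.
move=> uniq Qc; apply/rigid_pairP => b twist; apply: uniq.
by rewrite rootE (horner_mulXsubC Q twist) (rootP Qc) mul0r.
Qed.

(* Conversely a root b <> a of Q (x - a) twists to a root of Q, which must be c. *)
Lemma admissible_unique_root Q a c :
  admissible_pair a c -> unique_root c Q -> unique_root a (Q * ('X - a%:P)).
Proof.
move=> adm uniq b; have [//|ba] := eqVneq b a.
have dn : b - a != 0 by rewrite subr_eq0.
pose b' := (b - a) * b * qinv (b - a).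
have twist : b' * (b - a) = (b - a) * b by rewrite /b' -mulrA qmulVl // mulr1.
rewrite rootE (horner_mulXsubC Q twist) qmul_eq0 (negPf dn) orbF -rootE.
by move=> /uniq b'c; apply: (admissible_rigid adm); rewrite -b'c.
Qed.

(* For the forward step, a second root c' <> c of P_(c :: s)
   would lie on the sphere of a together with c, so conj a would be a root as
   well, contradicting the admissibility of (a, conj a). *)
Lemma unique_root_chain a s :
  unique_root a (Pseq (a :: s)) <-> admissible_chain a s.
Proof.
elim: s a => [|c s IH] a.
  by rewrite Pseq_cons /Pseq big_nil mul1r; split=> // _ b; rewrite root_XsubC => /eqP.
rewrite Pseq_cons /=; split=> [uniq|[ac /IH]]; last exact: admissible_unique_root.
have ac := unique_root_admissible uniq (root_Pseq_head c s).
split=> //; apply/IH => c' Qc'; have [//|c'c] := eqVneq c' c; exfalso.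
case: (unique_root_admissible uniq Qc') => [[c'a areal]|[anr _ sph' _]].
  case: ac => [[ca _]|[anr _ _ _]]; last exact: anr.
  by rewrite c'a ca eqxx in c'c.
case: ac => [[_ areal]|[_ _ sph cja]]; first exact: anr.
have Qconj : root (Pseq (c :: s)) (qconj a).
  apply: (sphere_roots Qc' (root_Pseq_head c s) c'c);
  by rewrite /cosphere qconj_Re qconj_norm2.
case: (unique_root_admissible uniq Qconj) => [[conja _]|[_ _ _]].
  exact: nonreal_conj conja.
by rewrite qconjK.
Qed.


Definition multiplicity_condition (a : seq H) :=
  ((forall i, (i < size a)%N -> a`_i = a`_0) /\ is_real_quat a`_0) \/
  ((forall i, (i < size a)%N -> ~ is_real_quat a`_i) /\
   (forall i, (i.+1 < size a)%N ->
      [/\ Req a`_i.+1 = Req a`_i, qnorm a`_i.+1 = qnorm a`_i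
        & qconj a`_i.+1 <> a`_i])).

(* The global condition is the chain of pairwise conditions: a real entry forces
   the next one to equal it, a non-real entry forces the next one non-real. *)
Lemma multiplicity_condition_chain a s :
  multiplicity_condition (a :: s) <-> admissible_chain a s.
Proof.
elim: s a => [|c s IH] a.
  split=> // _; have [areal|anr] := real_quat_dec a; [left | right]; by split=> // -[].
rewrite /= -IH; split.
  case=> [[const areal]|[nreal adj]].
    have ca : c = a := const 1%N erefl.
    split; first by left.
    left; split=> [i lti|]; last by rewrite ca.
    by have /= -> := const i.+1 lti; rewrite ca.
  have [Rca /qnorm_eq Nca cja] := adj 0%N erefl.
  split; first by right; split; [exact: (nreal 0%N) | exact: (nreal 1%N) | |].
  by right; split=> i lti; [exact: (nreal i.+1) | exact: (adj i.+1)].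
case=> [[[ca areal]|[anr cnr [Rca Nca] cja]]] [[const creal]|[nreal adj]].
- by left; split=> // -[|i] lti //=; rewrite -ca; exact: (const i).
- by case: (nreal 0%N); rewrite //= ca.
- by case: cnr.
- right; split=> [[|i] lti|[|i] lti] /=; first exact: anr.
  + exact: (nreal i).
  + by split=> //; exact/qnorm_eq.
  + exact: (adj i).
Qed.

Lemma mult_seq_chain a s : mult_seq (a :: s) <-> admissible_chain a s.
Proof.
rewrite -unique_root_chain /=; split=> [[_ uniq] b /factor_theorem|uniq].
  exact: uniq.
split; first exact/factor_theorem/root_Pseq_head.
by move=> b /factor_theorem; apply: uniq.
Qed.

End MultiplicitySequences.

Theorem mainTheorem17 (R : realType) :
  (forall a : seq (quat R), (0 < size a)%N ->
     (mult_seq a <->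
        ((forall i, (i < size a)%N -> a`_i = a`_0) /\ is_real_quat a`_0)
        \/
        ((forall i, (i < size a)%N -> ~ is_real_quat a`_i) /\
         (forall i, (i.+1 < size a)%N ->
            [/\ Req a`_i.+1 = Req a`_i,
                qnorm a`_i.+1 = qnorm a`_i
              & qconj a`_i.+1 <> a`_i]))))
  /\
  (forall (b : quat R) (r : nat), (0 < r)%N -> mult_seq (nseq r b)).
Proof.
split=> [[//|a s] _|b [//|r] _].
  exact: iff_trans (mult_seq_chain a s) (iff_sym (multiplicity_condition_chain a s)).
apply/mult_seq_chain; elim: r => //= r IH.
by split; first exact: admissible_pair_refl.
Qed.
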